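(* For an odd integer $n$ and any integer $1\leq k\leq\frac12(n-3)$, with $q=uv$, $$\sum_{1\leq i\leq\frac12(n-1)}e_{2i}\,g_{n-2i,n}\prod_{j=k-i+1}^{\frac12(n-1)-i}\frac{q^{2j}-1}{q^{2j-2k+2i}-1}=\frac{q^{nk}-1}{q-1}\prod_{j=k+1}^{\frac12(n-1)}\frac{q^{2j}-1}{q^{2j-2k}-1}.$$
   Context: $e_{2i}=e_{2i}(u,v)$ is the Hodge–Deligne polynomial of the variety of nondegenerate skew forms on $\mathbb{C}^{2i}$ up to scaling; $g_{m,n}=g_{m,n}(u,v)$ is the Hodge–Deligne polynomial of the Grassmannian $G(m,n)$. Empty products equal $1$. *)

From HB Require Import structures.
From mathcomp Require Import all_boot all_order all_algebra.
Set Implicit Arguments. Unset Strict Implicit. Unset Printing Implicit Defensive.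
Import Order.TTheory GRing.Theory Num.Theory.
Local Open Scope ring_scope.

(* Field of rational functions Q(q); q is the variable, standing for q = uv. *)
Definition Kq := {fraction {poly rat}}.
Definition qv : Kq := tofrac ('X : {poly rat}).

Definition zprod (R : comNzRingType) (a b : int) (F : int -> R) : R :=
  if (a <= b)%R then \prod_(t < absz (b - a + 1)%R) F (a + (t : nat)%:Z)%R else 1.

(* Hodge-Deligne polynomial (in q = uv) of the Grassmannian G(m,n):
   the Gaussian binomial [n choose m]_q. *)
Definition gHD (F : fieldType) (q : F) (m n : nat) : F :=
  \prod_(j < m) ((q ^+ (n - j) - 1) / (q ^+ j.+1 - 1)).

(* Hodge-Deligne polynomial (in q = uv) of the variety of nondegenerate skew
   forms on C^(2i) up to scaling:  |GL_2i| / |Sp_2i| / (q - 1)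
   = q^(i(i-1)) prod_(j=1..i) (q^(2j-1) - 1) / (q - 1). *)
Definition eHD (F : fieldType) (q : F) (i : nat) : F :=
  q ^+ (i * (i - 1)) * (\prod_(1 <= j < i.+1) (q ^+ (2 * j - 1) - 1)) / (q - 1).

From HB Require Import structures.
From mathcomp Require Import all_boot all_order all_algebra.
From mathcomp Require Import zify ring.
Set Implicit Arguments. Unset Strict Implicit. Unset Printing Implicit Defensive.
Import Order.TTheory GRing.Theory Num.Theory.
Local Open Scope ring_scope.

(* Write n = 2m + 1, p = q^2 and x = q^n, and let [r]! = prod_(t < r) (p^(t+1) - 1).
   Splitting q-factorials into their odd and even factors, the i-th summand becomes
   P / (q - 1) * [k choose i]_p * prod_(l < i) (x - p^l), where P is the product on
   the right-hand side; for i > k the summand vanishes, its product containing the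
   factor q^0 - 1.  The sum is then (x^k - 1) / (q - 1) * P by the q-analogue of
   Newton's expansion  x^k = sum_(i <= k) [k choose i]_p prod_(l < i) (x - p^l). *)

Section GaussianBinomial.
Variables (R : comNzRingType) (p : R).

Fixpoint gauss_binom (k i : nat) : R :=
  match k, i with
  | 0, 0 => 1
  | 0, _.+1 => 0
  | _.+1, 0 => 1
  | k'.+1, i'.+1 => gauss_binom k' i' + p ^+ i'.+1 * gauss_binom k' i'.+1
  end.

Definition qfalling (x : R) (i : nat) : R := \prod_(l < i) (x - p ^+ l).

Definition qfact (r : nat) : R := \prod_(t < r) (p ^+ t.+1 - 1).

Lemma gauss_binom0 k : gauss_binom k 0 = 1.
Proof. by case: k. Qed.

Lemma gauss_binom_gt k i : (k < i)%N -> gauss_binom k i = 0.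
Proof.
elim: k i => [|k IH] [|i] //= lt_ki.
by rewrite !IH ?mulr0 ?addr0 //; lia.
Qed.

Lemma qfallingS x i : qfalling x i.+1 = qfalling x i * (x - p ^+ i).
Proof. by rewrite /qfalling big_ord_recr. Qed.

Lemma qfact0 : qfact 0 = 1.
Proof. by rewrite /qfact big_ord0. Qed.

Lemma qfactS r : qfact r.+1 = qfact r * (p ^+ r.+1 - 1).
Proof. by rewrite /qfact big_ord_recr. Qed.

Lemma qfactD b c : qfact (b + c) = qfact b * \prod_(t < c) (p ^+ (b + t).+1 - 1).
Proof. by rewrite /qfact big_split_ord. Qed.

Lemma gauss_binom_expansion x k :
  \sum_(i < k.+1) gauss_binom k i * qfalling x i = x ^+ k.
Proof.
elim: k => [|k IH]; first by rewrite big_ord1 /qfalling big_ord0 mulr1.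
have shift i : x * (gauss_binom k i * qfalling x i) =
    gauss_binom k i * qfalling x i.+1 + p ^+ i * gauss_binom k i * qfalling x i.
  by rewrite qfallingS; ring.
rewrite exprS -IH mulr_sumr; under [RHS]eq_bigr => i _ do rewrite shift.
rewrite big_split /= [LHS]big_ord_recl /=.
under eq_bigr => i _ do rewrite /bump /= add0n add1n mulrDl.
rewrite big_split /= [X in _ = _ + X]big_ord_recl [X in _ + (_ + X) = _]big_ord_recr /=.
rewrite gauss_binom_gt // mulr0 mul0r addr0 !gauss_binom0 expr0 !mul1r.
by rewrite addrCA addrA.
Qed.

Lemma gauss_binom_expansion1 x k :
  \sum_(1 <= i < k.+1) gauss_binom k i * qfalling x i = x ^+ k - 1.
Proof.
rewrite -(gauss_binom_expansion x k) big_ord_recl /= big_add1 big_mkord.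
by rewrite gauss_binom0 /qfalling big_ord0 mul1r addrC addKr.
Qed.

Lemma gauss_binom_qfact k i : (i <= k)%N ->
  gauss_binom k i * qfact i * qfact (k - i) = qfact k.
Proof.
elim: k i => [|k IH] [|i] //= le_ik; first by rewrite qfact0 !mulr1.
  by rewrite subn0 qfact0 !mul1r.
rewrite subSS; move: le_ik; rewrite ltnS leq_eqVlt => /predU1P[->|lt_ik].
  have := IH k (leqnn k); rewrite subnn qfact0 mulr1 => IHk.
  by rewrite (gauss_binom_gt (ltnSn k)) mulr0 addr0 mulr1 qfactS mulrA IHk.
have [d def_d] : exists d, (k - i = d.+1)%N by exists (k - i).-1; lia.
have := IH i (ltnW lt_ik); rewrite def_d => IHi.
have := IH i.+1 lt_ik; rewrite (_ : k - i.+1 = d)%N; last by lia.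
move=> IHi1; rewrite !qfactS (_ : k.+1 = i.+1 + d.+1)%N; last by lia.
have -> : p ^+ (i.+1 + d.+1) - 1 = (p ^+ i.+1 - 1) + p ^+ i.+1 * (p ^+ d.+1 - 1).
  by rewrite exprD; ring.
rewrite [RHS]mulrDr -{1}IHi -IHi1 !qfactS; ring.
Qed.

End GaussianBinomial.

Section QFactorialField.
Variables (F : fieldType) (p : F).
Hypothesis p_nonroot : forall j, (0 < j)%N -> p ^+ j != 1.

Lemma qfact_neq0 r : qfact p r != 0.
Proof. by apply/prodf_neq0 => t _; rewrite subr_eq0 p_nonroot. Qed.

Lemma prod_qfact_ratio b c :
  \prod_(t < c) ((p ^+ (b + t).+1 - 1) / (p ^+ t.+1 - 1)) =
  qfact p (b + c) / (qfact p b * qfact p c).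
Proof.
rewrite prodf_div -/(qfact p c) qfactD.
by field; rewrite !qfact_neq0.
Qed.

Lemma gauss_binomE k i : (i <= k)%N ->
  gauss_binom p k i = qfact p k / (qfact p i * qfact p (k - i)).
Proof.
move=> le_ik; rewrite -(gauss_binom_qfact p le_ik).
by field; rewrite !qfact_neq0.
Qed.

End QFactorialField.

Definition qfact_odd (R : comNzRingType) (q : R) (r : nat) : R :=
  \prod_(t < r) (q ^+ (2 * t).+1 - 1).

Section OddEvenSplitting.
Variables (R : comNzRingType) (q : R).

Lemma qfact_oddS r : qfact_odd q r.+1 = qfact_odd q r * (q ^+ (2 * r).+1 - 1).
Proof. by rewrite /qfact_odd big_ord_recr. Qed.

Lemma qfact_double r : qfact q (2 * r) = qfact (q ^+ 2) r * qfact_odd q r.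
Proof.
elim: r => [|r IH]; first by rewrite /qfact_odd big_ord0 !qfact0 mulr1.
rewrite mulnS !qfactS IH qfact_oddS -exprM mulnS; ring.
Qed.

Lemma qfact_double_succ r : qfact q (2 * r).+1 = qfact (q ^+ 2) r * qfact_odd q r.+1.
Proof. by rewrite qfactS qfact_double qfact_oddS mulrA. Qed.

Lemma qfalling_odd a i :
  qfalling (q ^+ 2) (q ^+ (2 * (a + i)).+1) i * qfact_odd q a.+1 =
  q ^+ (i * (i - 1)) * qfact_odd q (a + i).+1.
Proof.
elim: i a => [|i IH] a; first by rewrite /qfalling big_ord0 mul1r expr0 mul1r addn0.
have step : (q ^+ (2 * (a + i.+1)).+1 - (q ^+ 2) ^+ i) * qfact_odd q a.+1 =
    q ^+ (2 * i) * qfact_odd q a.+2.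
  rewrite (qfact_oddS a.+1) -exprM (_ : (2 * (a + i.+1)).+1 = 2 * i + (2 * a.+1).+1)%N.
    by rewrite exprD; ring.
  by lia.
rewrite qfallingS -mulrA step mulrCA -addSnnS IH mulrA -exprD.
by congr (q ^+ _ * _); case: i {IH step} => [|i] //; rewrite !subn1 /=; nia.
Qed.

End OddEvenSplitting.

Definition summand_ratio (F : fieldType) (q : F) (k i : nat) (j : int) : F :=
  (q ^ (2 * j) - 1) / (q ^ (2 * j - 2 * k%:Z + 2 * i%:Z) - 1).

Section HodgeDeligneFactorials.
Variables (F : fieldType) (q : F).
Hypothesis q_nonroot : forall j, (0 < j)%N -> q ^+ j != 1.

Lemma sqr_nonroot j : (0 < j)%N -> (q ^+ 2) ^+ j != 1.
Proof. by move=> j_gt0; rewrite -exprM q_nonroot ?muln_gt0. Qed.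

Lemma qfact_odd_neq0 r : qfact_odd q r != 0.
Proof. by apply/prodf_neq0 => t _; rewrite subr_eq0 q_nonroot. Qed.

Lemma subr1_neq0 : q - 1 != 0.
Proof. by rewrite subr_eq0 -[q]expr1 q_nonroot. Qed.

Lemma eHD_qfact_odd i : eHD q i = q ^+ (i * (i - 1)) * qfact_odd q i / (q - 1).
Proof.
rewrite /eHD big_add1 big_mkord /qfact_odd; congr (_ * _ * _).
by apply: eq_bigr => t _; rewrite subn1 mulnS.
Qed.

Lemma gHD_qfact r n : (r <= n)%N ->
  gHD q r n = qfact q n / (qfact q r * qfact q (n - r)).
Proof.
move=> le_rn; rewrite /gHD prodf_div -/(qfact q r).
have -> : qfact q n = qfact q (n - r) * \prod_(t < r) (q ^+ (n - r + t).+1 - 1).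
  by rewrite -qfactD subnK.
have -> : \prod_(j < r) (q ^+ (n - j) - 1) = \prod_(t < r) (q ^+ (n - r + t).+1 - 1).
  rewrite (reindex_inj rev_ord_inj); apply: eq_bigr => t _ /=.
  by rewrite (_ : n - (r - t.+1) = (n - r + t).+1)%N //; have := ltn_ord t; lia.
by field; rewrite !(qfact_neq0 q_nonroot).
Qed.

Lemma eHD_gHD m i : (i <= m)%N ->
  eHD q i * gHD q (m.*2.+1 - i.*2) m.*2.+1 =
  qfalling (q ^+ 2) (q ^+ m.*2.+1) i * qfact (q ^+ 2) m /
    ((q - 1) * qfact (q ^+ 2) i * qfact (q ^+ 2) (m - i)).
Proof.
move=> le_im; rewrite eHD_qfact_odd gHD_qfact; last by lia.
have -> : (m.*2.+1 - (m.*2.+1 - i.*2) = 2 * i)%N by lia.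
have -> : (m.*2.+1 - i.*2 = (2 * (m - i)).+1)%N by lia.
rewrite -mul2n !qfact_double_succ qfact_double.
have := qfalling_odd q (m - i) i; rewrite subnK // => /(canRL (mulfK (qfact_odd_neq0 _))) ->.
have qfact2_neq0 := qfact_neq0 sqr_nonroot.
by field; rewrite subr1_neq0 !qfact_odd_neq0 !qfact2_neq0.
Qed.

Lemma zprod_qfact k m i : (i <= k)%N -> (k <= m)%N ->
  zprod (k%:Z - i%:Z + 1) (m%:Z - i%:Z) (summand_ratio q k i) =
  qfact (q ^+ 2) (m - i) / (qfact (q ^+ 2) (k - i) * qfact (q ^+ 2) (m - k)).
Proof.
move=> le_ik le_km; rewrite /zprod; case: ifP => [_|]; last first.
  move=> /negbT; rewrite -ltNge => ?.
  have -> : (m = k)%N by lia.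
  by rewrite subnn qfact0 mulr1 divff // (qfact_neq0 sqr_nonroot).
have -> : (m - i = k - i + (m - k))%N by lia.
rewrite -(prod_qfact_ratio sqr_nonroot).
have -> : absz (m%:Z - i%:Z - (k%:Z - i%:Z + 1) + 1)%R = (m - k)%N by lia.
apply: eq_bigr => t _; rewrite /summand_ratio -!exprM.
have -> : (2 * (k%:Z - i%:Z + 1 + t%:Z))%R = (2 * (k - i + t).+1)%N%:Z by lia.
by have -> : ((2 * (k - i + t).+1)%N%:Z - 2 * k%:Z + 2 * i%:Z)%R = (2 * t.+1)%N%:Z by lia.
Qed.

Lemma zprod_vanish k m i : (k < i)%N -> (i <= m)%N ->
  zprod (k%:Z - i%:Z + 1) (m%:Z - i%:Z) (summand_ratio q k i) = 0.
Proof.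
move=> lt_ki le_im; rewrite /zprod ifT; last by lia.
have -> : absz (m%:Z - i%:Z - (k%:Z - i%:Z + 1) + 1)%R = (m - k)%N by lia.
have lt_t : (i - k.+1 < m - k)%N by lia.
rewrite (bigD1 (Ordinal lt_t)) //= /summand_ratio.
have -> : (2 * (k%:Z - i%:Z + 1 + (i - k.+1)%N%:Z))%R = 0 by lia.
by rewrite expr0z subrr !mul0r.
Qed.

Lemma prod_nat_qfact k m : (k <= m)%N ->
  \prod_(k.+1 <= j < m.+1) ((q ^+ (2 * j) - 1) / (q ^+ (2 * j - 2 * k) - 1)) =
  qfact (q ^+ 2) m / (qfact (q ^+ 2) k * qfact (q ^+ 2) (m - k)).
Proof.
move=> le_km; rewrite -{2}(subnKC le_km) -(prod_qfact_ratio sqr_nonroot).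
rewrite (big_addn 0 _ k.+1) subSS big_mkord; apply: eq_bigr => t _.
rewrite -!exprM (_ : 2 * (t + k.+1) = 2 * (k + t).+1)%N; last by lia.
by rewrite (_ : 2 * (k + t).+1 - 2 * k = 2 * t.+1)%N //; lia.
Qed.

Lemma summand_gauss_binom m k i : (i <= k)%N -> (k <= m)%N ->
  eHD q i * gHD q (m.*2.+1 - i.*2) m.*2.+1 *
  zprod (k%:Z - i%:Z + 1) (m%:Z - i%:Z) (summand_ratio q k i) =
  \prod_(k.+1 <= j < m.+1) ((q ^+ (2 * j) - 1) / (q ^+ (2 * j - 2 * k) - 1)) / (q - 1) *
  (gauss_binom (q ^+ 2) k i * qfalling (q ^+ 2) (q ^+ m.*2.+1) i).
Proof.
move=> le_ik le_km; have le_im := leq_trans le_ik le_km.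
rewrite eHD_gHD // zprod_qfact // prod_nat_qfact // (gauss_binomE sqr_nonroot le_ik).
have qfact2_neq0 := qfact_neq0 sqr_nonroot.
by field; rewrite subr1_neq0 !qfact2_neq0.
Qed.

End HodgeDeligneFactorials.

Lemma qv_nonroot j : (0 < j)%N -> qv ^+ j != 1.
Proof.
move=> j_gt0; rewrite /qv -rmorphXn -(rmorph1 (@tofrac _)) tofrac_eq.
apply/negP => /eqP/(congr1 (fun p : {poly rat} => size p)).
by rewrite /= size_polyXn size_poly1; lia.
Qed.

Unset Implicit Arguments.

Theorem proposition7p11 (n k : nat) :
  odd n -> (1 <= k)%N -> (k.*2 + 3 <= n)%N ->
  let q := qv in
  \sum_(1 <= i < ((n - 1)./2).+1)
     eHD q i * gHD q (n - i.*2) n *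
     zprod (k%:Z - i%:Z + 1) (((n - 1)./2)%:Z - i%:Z)
       (fun j : int => (q ^ (2 * j) - 1) / (q ^ (2 * j - 2 * k%:Z + 2 * i%:Z) - 1))
  = (q ^+ (n * k) - 1) / (q - 1) *
    \prod_(k.+1 <= j < ((n - 1)./2).+1) ((q ^+ (2 * j) - 1) / (q ^+ (2 * j - 2 * k) - 1)).
Proof.
move=> odd_n k_gt0 le_kn q.
have [m def_n] : exists m, n = m.*2.+1.
  by exists n./2; rewrite -[n in n = _]odd_double_half odd_n.
subst n.
rewrite (_ : (m.*2.+1 - 1)./2 = m)%N; last by rewrite subn1 /= doubleK.
have lt_km : (k < m)%N by lia.
rewrite (@big_cat_nat _ _ _ k.+1) //=; last by lia.
rewrite [X in _ + X]big_nat_cond [X in _ + X]big1 ?addr0; last first.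
  by move=> i /andP[/andP[lt_ki le_im] _]; rewrite zprod_vanish ?mulr0.
under eq_big_nat => i /andP[_ /[!ltnS] le_ik] do
  rewrite (summand_gauss_binom qv_nonroot le_ik (ltnW lt_km)).
by rewrite -mulr_sumr gauss_binom_expansion1 /q -exprM mulrAC [RHS]mulrC mulrA.
Qed.
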